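(* In the backward-propagation task model described in the context, suppose the computing tasks are executed in the order $E_R^{(L)},\dots,E_1^{(L)},AT_R^{(L)},\dots,AT_1^{(L)},E_R^{(L-1)},\dots,AT_1^{(L-1)},\dots,AT_1^{(1)}$ and the A2A communication tasks in the order $C_R^{(L)},\dots,C_1^{(L)},D_R^{(L)},\dots,D_1^{(L)},C_R^{(L-1)},\dots,D_1^{(L-1)},\dots,D_1^{(1)}$, and that the all-reduce communication is performed with the chunk-based priority scheduling mechanism with chunk size $S_p$. If communicating an all-reduce tensor chunk incurs no startup overhead, then the time per iteration is minimized as $S_p\to 0$.
   Context: Backward-propagation task model for one training iteration of a distributed Mixture-of-Experts transformer with $L$ transformer blocks, each with an MHA layer plus gating function and an MoE layer, whose input is split into $R$ equal parts. For block $l$ and $1\le r\le R$: $AT_r^{(l)}$ (MHA+gating computing subtask), $E_r^{(l)}$ (expert computing subtask), $D_r^{(l)}$ (dispatch all-to-all (A2A) communication subtask), $C_r^{(l)}$ (combine A2A communication subtask), and an all-reduce communication of the gradient tensor of the MHA and gating parameters of block $l$. Tasks of the same type have equal durations. There is one computing resource and one communication resource; a computing and a communication task may run simultaneously, but not two of the same kind; tasks are non-preemptive. Dependencies: $C_r^{(l-1)}$ starts after $AT_r^{(l)}$ finishes ($1<l\le L$); $E_r^{(l)}$ after $C_r^{(l)}$; $D_r^{(l)}$ after $E_r^{(l)}$; $AT_r^{(l)}$ after $D_r^{(l)}$; the all-reduce of block $l$ can start only after all $AT_r^{(l)}$ ($1\le r\le R$) finish. Chunk-based priority scheduling: the all-reduce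 gradient tensor of each block is partitioned into chunks of size $S_p$, each communicated as a separate (non-preemptive) communication task with duration proportional to its size; all pending A2A tasks and all-reduce chunks are kept in a communication pool in which A2A tasks have strictly higher priority than all-reduce chunks, i.e. an all-reduce chunk is started on the communication resource only when no A2A task is ready to execute. *)

From Stdlib Require Import Reals List Arith ZArith.
From Coquelicot Require Import Coquelicot.
Import ListNotations.
Open Scope R_scope.

(* computing subtasks: E l r = E_r^(l), AT l r = AT_r^(l) *)
Inductive comp_task := E (l r : nat) | AT (l r : nat).
(* A2A communication subtasks: Cm l r = C_r^(l) (combine), Dm l r = D_r^(l) (dispatch) *)
Inductive comm_task := Cm (l r : nat) | Dm (l r : nat).

Definition comp_eqb (x y : comp_task) : bool :=
  match x, y with
  | E l r, E l' r' | AT l r, AT l' r' => Nat.eqb l l' && Nat.eqb r r'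
  | _, _ => false
  end.
Definition comm_eqb (x y : comm_task) : bool :=
  match x, y with
  | Cm l r, Cm l' r' | Dm l r, Dm l' r' => Nat.eqb l l' && Nat.eqb r r'
  | _, _ => false
  end.

Definition down (n : nat) : list nat := rev (seq 1 n).

Definition comp_order (L Rp : nat) : list comp_task :=
  flat_map (fun l => map (E l) (down Rp) ++ map (AT l) (down Rp)) (down L).
Definition a2a_order (L Rp : nat) : list comm_task :=
  flat_map (fun l => map (Cm l) (down Rp) ++ map (Dm l) (down Rp)) (down L).

Definition comp_dep (c : comp_task) : comm_task :=
  match c with E l r => Cm l r | AT l r => Dm l r end.
(* D_r^(l) after E_r^(l); C_r^(l-1) after AT_r^(l) (1 < l <= L), i.e.
   C_r^(l) after AT_r^(l+1) for l < L; C_r^(L) has no predecessor *)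
Definition a2a_dep (L : nat) (a : comm_task) : option comp_task :=
  match a with
  | Dm l r => Some (E l r)
  | Cm l r => if Nat.ltb l L then Some (AT (S l) r) else None
  end.

Record durations := {
  d_AT : R;  (* MHA+gating computing subtask *)
  d_E  : R;  (* expert computing subtask *)
  d_D  : R;
  d_C  : R;
  beta : R;  (* all-reduce communication time per unit of tensor size *)
  G    : R   (* size of the all-reduce gradient tensor of one block *)
}.

Definition comp_dur (d : durations) (c : comp_task) : R :=
  match c with E _ _ => d_E d | AT _ _ => d_AT d end.
Definition comm_dur (d : durations) (a : comm_task) : R :=
  match a with Cm _ _ => d_C d | Dm _ _ => d_D d end.

Definition chunk_sizes (Gs Sp : R) : list R :=
  let n := Z.to_nat (Int_part (Gs / Sp)) in
  let rem := Gs - INR n * Sp in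
  repeat Sp n ++ (if Rlt_dec 0 rem then [rem] else []).

(* no startup overhead: duration of a chunk is proportional to its size *)
Definition chunk_durs (d : durations) (Sp : R) : list R :=
  map (fun s => beta d * s) (chunk_sizes (G d) Sp).

(** The communication resource is free at
    time [t]; the next A2A task becomes ready at time [rdy]; [q] is the FIFO
    queue of all-reduce chunks (release time, duration).  An all-reduce chunk is
    started only when no A2A task is ready; the resource never idles while
    something can run. *)
Fixpoint fill (t rdy : R) (q : list (R * R)) : R * list (R * R) :=
  if Rle_dec rdy t then (t, q) else
  match q with
  | [] => (rdy, [])
  | (rel, dur) :: q' =>
      let s := Rmax t rel in
      if Rle_dec rdy s then (rdy, q)   (* A2A ready no later than the chunk: A2A first *)
      else fill (s + dur) rdy q'
  end.

(* after the last A2A task: all remaining chunks *)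
Fixpoint flush (t : R) (q : list (R * R)) : R :=
  match q with
  | [] => t
  | (rel, dur) :: q' => flush (Rmax t rel + dur) q'
  end.

Record state := mkState {
  rem_comp : list comp_task;
  rem_comm : list comm_task;
  fin_comp : comp_task -> option R;
  fin_comm : comm_task -> option R;
  free_comp : R;
  free_comm : R;
  queue : list (R * R)
}.

Definition upd_comp (f : comp_task -> option R) c x : comp_task -> option R :=
  fun c' => if comp_eqb c c' then Some x else f c'.
Definition upd_comm (f : comm_task -> option R) a x : comm_task -> option R :=
  fun a' => if comm_eqb a a' then Some x else f a'.

(* the all-reduce of block l is released once all AT_r^(l), 1 <= r <= Rp, finished *)
Definition block_done (Rp : nat) (f : comp_task -> option R) (l : nat) : bool :=
  forallb (fun r => match f (AT l r) with Some _ => true | None => false end) (seq 1 Rp).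
Definition block_release (Rp : nat) (f : comp_task -> option R) (l : nat) : R :=
  fold_right (fun r acc => match f (AT l r) with Some x => Rmax x acc | None => acc end)
    0 (seq 1 Rp).

Definition final_time (st : state) : R :=
  Rmax (free_comp st) (flush (free_comm st) (queue st)).

(** event-driven simulation: computing tasks run in their order, each as soon
    as the computing resource is free and its predecessor has finished; A2A
    tasks run in their order, each as soon as the communication resource is free
    and its predecessor has finished, with the priority rule above for the
    interleaved all-reduce chunks. *)
Fixpoint simulate (L Rp : nat) (d : durations) (Sp : R) (fuel : nat) (st : state) : R :=
  match fuel with
  | O => final_time st
  | S fuel' =>
    let comp_step :=
      match rem_comp st with
      | c :: cs =>
          match fin_comm st (comp_dep c) with
          | Some fd =>
              let fin := Rmax (free_comp st) fd + comp_dur d c in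
              let fc := upd_comp (fin_comp st) c fin in
              let q := match c with
                       | AT l _ => if block_done Rp fc l
                                   then queue st ++ map (fun du => (block_release Rp fc l, du))
                                                        (chunk_durs d Sp)
                                   else queue st
                       | E _ _ => queue st
                       end in
              Some (mkState cs (rem_comm st) fc (fin_comm st) fin (free_comm st) q)
          | None => None
          end
      | [] => None
      end in
    match comp_step with
    | Some st' => simulate L Rp d Sp fuel' st'
    | None =>
      match rem_comm st with
      | a :: as_ =>
          let ready :=
            match a2a_dep L a with
            | None => Some 0
            | Some c => fin_comp st c
            end in
          match ready with
          | Some rdy =>
              let (start, q) := fill (free_comm st) rdy (queue st) in
              let fin := start + comm_dur d a in
              simulate L Rp d Sp fuel'
                (mkState (rem_comp st) as_ (fin_comp st) (upd_comm (fin_comm st) a fin)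
                         (free_comp st) fin q)
          | None => final_time st  (* deadlock: cannot occur for the given orders *)
          end
      | [] => final_time st
      end
    end
  end.

Definition init_state (L Rp : nat) : state :=
  mkState (comp_order L Rp) (a2a_order L Rp) (fun _ => None) (fun _ => None) 0 0 [].

Definition iteration_time (L Rp : nat) (d : durations) (Sp : R) : R :=
  simulate L Rp d Sp (4 * L * Rp + 1) (init_state L Rp).

(* Compare the schedule with chunk size [Sp] with the schedule in which every all-reduce chunk
   takes no time, which does not depend on [Sp].

   Both schedules make the same decisions in the same order. A chunk only starts while no A2A task
   is ready and lasts at most [c = beta Sp], so it postpones the next A2A task by at most [c]; by
   induction, after [n] simulation steps every time of the real schedule lies between its ideal
   counterpart and that counterpart plus [n c].

   The makespan is then pinned down by work conservation on the communication resource. After any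
   event time [tau] it must still run every A2A task started at or after [tau] and every
   all-reduce tensor released at or after [tau], which gives a lower bound [load_bound tau];
   conversely, during its last busy period, started at some event, it only runs such work, so the
   makespan is the largest of these bounds (or the end of the computation). Evaluated on the ideal
   schedule this quantity [T*] satisfies [T* <= T(Sp) <= T* + N beta Sp], [N] being the number of
   steps, hence [T(Sp)] tends to its lower bound [T*] as [Sp -> 0]. *)

From Stdlib Require Import Reals Lra Lia ZArith.
From Coquelicot Require Import Coquelicot.
From Stdlib Require Import List Sorted.
Import ListNotations.
Open Scope R_scope.

(** * Jobs and load bounds *)

Definition rsum (l : list R) : R := fold_right Rplus 0 l.

Lemma rsum_app (l1 l2 : list R) : rsum (l1 ++ l2) = rsum l1 + rsum l2.
Proof. unfold rsum. induction l1 as [|x l1 IH]; simpl; [ring|]. rewrite IH; ring. Qed.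

Lemma rsum_repeat (x : R) (n : nat) : rsum (repeat x n) = INR n * x.
Proof.
  unfold rsum. induction n as [|n IH]; simpl repeat; simpl fold_right; [simpl; ring|].
  rewrite IH, S_INR; ring.
Qed.

Lemma rsum_scal (b : R) (l : list R) : rsum (map (fun s => b * s) l) = b * rsum l.
Proof. unfold rsum. induction l as [|x l IH]; simpl; [ring|]. rewrite IH; ring. Qed.

Lemma rsum_nonneg (l : list R) : Forall (fun x => 0 <= x) l -> 0 <= rsum l.
Proof. unfold rsum. induction 1; simpl; lra. Qed.

(* Jobs are pairs (release time, duration). *)
Definition work_from (q : list (R * R)) (tau : R) : R :=
  fold_right (fun p acc => (if Rle_dec tau (fst p) then snd p else 0) + acc) 0 q.

Definition total_work (q : list (R * R)) : R := rsum (map snd q).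

Definition nonneg_jobs (q : list (R * R)) : Prop := Forall (fun p => 0 <= snd p) q.

Definition tensors (W : R) (Bs : list R) : list (R * R) := map (fun r => (r, W)) Bs.

Lemma work_from_nonneg (q : list (R * R)) (tau : R) : nonneg_jobs q -> 0 <= work_from q tau.
Proof. induction 1 as [|p q Hp _ IH]; simpl; [lra|]. destruct Rle_dec; lra. Qed.

Lemma work_from_app (q1 q2 : list (R * R)) (tau : R) :
  work_from (q1 ++ q2) tau = work_from q1 tau + work_from q2 tau.
Proof. induction q1 as [|p q1 IH]; simpl; [ring|]. rewrite IH; ring. Qed.

Lemma work_from_all (q : list (R * R)) (tau : R) :
  Forall (fun p => tau <= fst p) q -> work_from q tau = total_work q.
Proof.
  induction 1 as [|p q Hp _ IH]; [reflexivity|].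
  cbn [work_from fold_right]. fold (work_from q tau). rewrite IH.
  destruct Rle_dec; [|contradiction]. reflexivity.
Qed.

Lemma work_from_batch (r : R) (l : list R) (tau : R) :
  work_from (map (fun du => (r, du)) l) tau = if Rle_dec tau r then rsum l else 0.
Proof.
  induction l as [|x l IH]; cbn [map work_from fold_right fst snd] in *.
  - destruct Rle_dec; reflexivity.
  - fold (work_from (map (fun du => (r, du)) l) tau). rewrite IH.
    unfold rsum; simpl. destruct Rle_dec; ring.
Qed.

Lemma total_work_app (q1 q2 : list (R * R)) : total_work (q1 ++ q2) = total_work q1 + total_work q2.
Proof. unfold total_work. rewrite map_app. apply rsum_app. Qed.

Lemma total_work_batch (r : R) (l : list R) : total_work (map (fun du => (r, du)) l) = rsum l.
Proof. unfold total_work. rewrite map_map. simpl. rewrite map_id. reflexivity. Qed.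

Lemma tensors_nonneg (W : R) (Bs : list R) : 0 <= W -> nonneg_jobs (tensors W Bs).
Proof.
  intros HW. apply Forall_forall. intros p Hp. apply in_map_iff in Hp as (r & <- & _). exact HW.
Qed.

Definition events (As : list (R * R)) (Bs : list R) : list R := 0 :: map fst As ++ Bs.

(* Whatever the schedule, after time [tau] the communication resource still has to run every A2A
   task started at or after [tau] and every all-reduce tensor (of total duration [W]) released at
   or after [tau]. *)
Definition load_bound (W : R) (As : list (R * R)) (Bs : list R) (tau : R) : R :=
  tau + work_from As tau + work_from (tensors W Bs) tau.

Lemma load_bound_cons (W s a : R) (As : list (R * R)) (Bs : list R) (tau : R) :
  load_bound W ((s, a) :: As) Bs tau = load_bound W As Bs tau + (if Rle_dec tau s then a else 0).
Proof. unfold load_bound; simpl; ring. Qed.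

Lemma load_bound_release (W r : R) (As : list (R * R)) (Bs : list R) (tau : R) :
  load_bound W As (r :: Bs) tau = load_bound W As Bs tau + (if Rle_dec tau r then W else 0).
Proof. unfold load_bound; simpl; ring. Qed.

Lemma events_cons (p : R * R) (As : list (R * R)) (Bs : list R) (tau : R) :
  In tau (events As Bs) -> In tau (events (p :: As) Bs).
Proof. simpl; tauto. Qed.

Lemma events_head (s a : R) (As : list (R * R)) (Bs : list R) : In s (events ((s, a) :: As) Bs).
Proof. simpl; tauto. Qed.

Lemma events_release (r : R) (As : list (R * R)) (Bs : list R) : In r Bs -> In r (events As Bs).
Proof. intros Hr. right. apply in_or_app. now right. Qed.

Lemma events_release_cons (r tau : R) (As : list (R * R)) (Bs : list R) :
  In tau (events As Bs) -> In tau (events As (r :: Bs)).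
Proof.
  intros [H|H]; [now left|right]. apply in_app_or in H as [H|H]; apply in_or_app; simpl; tauto.
Qed.

Definition max_list (l : list R) : R := fold_right Rmax 0 l.

Lemma max_list_ge (l : list R) (x : R) : In x l -> x <= max_list l.
Proof.
  induction l as [|y l IH]; simpl; [tauto|]. intros [<-|H]; [apply Rmax_l|].
  eapply Rle_trans; [now apply IH|apply Rmax_r].
Qed.

Lemma max_list_nonneg (l : list R) : 0 <= max_list l.
Proof. induction l as [|y l IH]; simpl; [lra|]. eapply Rle_trans; [exact IH|apply Rmax_r]. Qed.

Lemma max_list_lub (l : list R) (M : R) : 0 <= M -> (forall x, In x l -> x <= M) -> max_list l <= M.
Proof. induction l as [|y l IH]; simpl; intros; [lra|]. apply Rmax_lub; auto. Qed.

Definition max_load_bound (W : R) (As : list (R * R)) (Bs : list R) : R :=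
  max_list (map (load_bound W As Bs) (events As Bs)).

Lemma load_bound_le_max (W : R) (As : list (R * R)) (Bs : list R) (tau : R) :
  In tau (events As Bs) -> load_bound W As Bs tau <= max_load_bound W As Bs.
Proof. intros Htau. apply max_list_ge, in_map, Htau. Qed.

Lemma max_load_bound_nonneg (W : R) (As : list (R * R)) (Bs : list R) : 0 <= max_load_bound W As Bs.
Proof. apply max_list_nonneg. Qed.

Lemma max_load_bound_lub (W M : R) (As : list (R * R)) (Bs : list R) :
  0 <= M -> (forall tau, In tau (events As Bs) -> load_bound W As Bs tau <= M) ->
  max_load_bound W As Bs <= M.
Proof.
  intros HM H. apply max_list_lub; [exact HM|].
  intros x Hx. apply in_map_iff in Hx as (tau & <- & Htau). now apply H.
Qed.

Lemma least_above (l : list R) (m : R) :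
  (forall y, In y l -> y < m) \/
  exists t, In t l /\ m <= t /\ forall y, In y l -> m <= y -> t <= y.
Proof.
  induction l as [|x l [IH|(t & Ht & Hmt & Hleast)]]; [left; simpl; tauto| |].
  - destruct (Rle_dec m x) as [Hx|Hx].
    + right. exists x. split; [now left|split; [exact Hx|]].
      intros y [<-|Hy] Hmy; [lra|]. specialize (IH y Hy). lra.
    + left. intros y [<-|Hy]; [lra|auto].
  - right. destruct (Rle_dec m x) as [Hx|Hx]; [destruct (Rle_dec x t) as [Hxt|Hxt]|].
    + exists x. split; [now left|split; [exact Hx|]].
      intros y [<-|Hy] Hmy; [lra|]. specialize (Hleast y Hy Hmy). lra.
    + exists t. split; [now right|split; [exact Hmt|]].
      intros y [<-|Hy] Hmy; [lra|auto].
    + exists t. split; [now right|split; [exact Hmt|]].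
      intros y [<-|Hy] Hmy; [lra|auto].
Qed.

(** * Delayed schedules *)

Definition late (D x x0 : R) : Prop := x0 <= x <= x0 + D.

Definition delayed (D : R) (q q0 : list (R * R)) : Prop :=
  Forall2 (fun p p0 => snd p = snd p0 /\ late D (fst p) (fst p0)) q q0.

Lemma late_weaken (D D' x x0 : R) : D <= D' -> late D x x0 -> late D' x x0.
Proof. unfold late; lra. Qed.

Lemma Forall2_late_weaken (D D' : R) (X X0 : list R) :
  D <= D' -> Forall2 (late D) X X0 -> Forall2 (late D') X X0.
Proof. intros HD. apply Forall2_impl. intros x x0. now apply late_weaken. Qed.

Definition late_opt (D : R) (o o0 : option R) : Prop :=
  match o, o0 with
  | Some x, Some x0 => late D x x0
  | None, None => True
  | _, _ => False
  end.

Lemma late_opt_weaken (D D' : R) (o o0 : option R) : D <= D' -> late_opt D o o0 -> late_opt D' o o0.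
Proof. destruct o, o0; simpl; auto. apply late_weaken. Qed.

Lemma Rmax_late (D x x0 y y0 : R) :
  late D x x0 -> late D y y0 -> late D (Rmax x y) (Rmax x0 y0).
Proof. unfold late, Rmax. intros. repeat destruct Rle_dec; lra. Qed.

Lemma delayed_weaken (D D' : R) (q q0 : list (R * R)) :
  D <= D' -> delayed D q q0 -> delayed D' q q0.
Proof.
  intros HD. apply Forall2_impl. intros p p0 [? ?]. split; [auto|]. now apply (late_weaken D).
Qed.

Lemma delayed_tensors (D W : R) (Bs Bs0 : list R) :
  Forall2 (late D) Bs Bs0 -> delayed D (tensors W Bs) (tensors W Bs0).
Proof. induction 1; constructor; simpl; auto. Qed.

Lemma delayed_fst (D : R) (q q0 : list (R * R)) :
  delayed D q q0 -> Forall2 (late D) (map fst q) (map fst q0).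
Proof. induction 1 as [|p p0 q q0 [_ ?] _ IH]; constructor; auto. Qed.

Lemma events_late (D : R) (As As0 : list (R * R)) (Bs Bs0 : list R) :
  0 <= D -> delayed D As As0 -> Forall2 (late D) Bs Bs0 ->
  Forall2 (late D) (events As Bs) (events As0 Bs0).
Proof.
  intros HD HA HB. constructor; [unfold late; lra|].
  apply Forall2_app; [now apply delayed_fst|exact HB].
Qed.

Lemma late_counterpart_below (D : R) (X X0 : list R) (y : R) :
  Forall2 (late D) X X0 -> In y X0 -> exists x, In x X /\ y <= x.
Proof.
  induction 1 as [|x x0 X X0 Hx _ IH]; [simpl; tauto|]. intros [<-|Hy].
  - exists x. split; [now left|apply Hx].
  - destruct (IH Hy) as (x' & ? & ?). exists x'. split; [now right|auto].
Qed.

Lemma late_counterpart_above (D : R) (X X0 : list R) (x : R) :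
  Forall2 (late D) X X0 -> In x X -> exists y, In y X0 /\ x - D <= y.
Proof.
  induction 1 as [|x' x0 X X0 Hx _ IH]; [simpl; tauto|]. intros [<-|Hin].
  - exists x0. split; [now left|unfold late in Hx; lra].
  - destruct (IH Hin) as (y & ? & ?). exists y. split; [now right|auto].
Qed.

Lemma work_from_delayed_ge (D : R) (q q0 : list (R * R)) (tau : R) :
  delayed D q q0 -> nonneg_jobs q -> work_from q0 tau <= work_from q tau.
Proof.
  induction 1 as [|p p0 q q0 [Hd Hw] _ IH]; simpl; intros Hq; [lra|].
  inversion Hq as [|? ? Hp Hq']; subst. specialize (IH Hq'). unfold late in Hw.
  destruct (Rle_dec tau (fst p0)), (Rle_dec tau (fst p)); lra.
Qed.

Lemma work_from_delayed_le (D : R) (q q0 : list (R * R)) (tau' tau : R) :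
  delayed D q q0 -> nonneg_jobs q ->
  (forall y, In y (map fst q0) -> tau' - D <= y -> tau <= y) ->
  work_from q tau' <= work_from q0 tau.
Proof.
  induction 1 as [|p p0 q q0 [Hd Hw] _ IH]; simpl; intros Hq Hleast; [lra|].
  inversion Hq as [|? ? Hp Hq']; subst. unfold late in Hw.
  assert (IH' : work_from q tau' <= work_from q0 tau) by auto.
  destruct (Rle_dec tau' (fst p)).
  - assert (tau <= fst p0) by (apply Hleast; [now left|lra]).
    destruct (Rle_dec tau (fst p0)); [lra|contradiction].
  - destruct (Rle_dec tau (fst p0)); lra.
Qed.

Lemma load_bound_delayed_ge (D W : R) (As As0 : list (R * R)) (Bs Bs0 : list R) (tau : R) :
  0 <= W -> nonneg_jobs As -> delayed D As As0 -> Forall2 (late D) Bs Bs0 ->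
  load_bound W As0 Bs0 tau <= load_bound W As Bs tau.
Proof.
  intros HW HAn HA HB. unfold load_bound.
  pose proof (work_from_delayed_ge D As As0 tau HA HAn).
  pose proof (work_from_delayed_ge D _ _ tau (delayed_tensors D W Bs Bs0 HB)
                (tensors_nonneg W Bs HW)).
  lra.
Qed.

(* Compare an event [tau'] of the delayed schedule with the least event [tau >= tau' - D] of the
   original one. *)
Lemma load_bound_delayed_le (D W : R) (As As0 : list (R * R)) (Bs Bs0 : list R) (tau' : R) :
  0 <= W -> 0 <= D -> nonneg_jobs As -> delayed D As As0 -> Forall2 (late D) Bs Bs0 ->
  In tau' (events As Bs) ->
  load_bound W As Bs tau' <= max_load_bound W As0 Bs0 + D.
Proof.
  intros HW HD HAn HA HB Hin.
  pose proof (events_late D As As0 Bs Bs0 HD HA HB) as Hev.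
  destruct (least_above (events As0 Bs0) (tau' - D)) as [Hnone|(tau & Htau & Hle & Hleast)].
  - destruct (late_counterpart_above D _ _ tau' Hev Hin) as (y & Hy & Hy').
    specialize (Hnone y Hy). lra.
  - pose proof (load_bound_le_max W As0 Bs0 tau Htau).
    assert (HAw : work_from As tau' <= work_from As0 tau).
    { apply (work_from_delayed_le D); auto.
      intros y Hy Hy'. apply Hleast; [right; apply in_or_app; now left|exact Hy']. }
    assert (HBw : work_from (tensors W Bs) tau' <= work_from (tensors W Bs0) tau).
    { apply (work_from_delayed_le D); auto using delayed_tensors, tensors_nonneg.
      intros y Hy Hy'. apply Hleast; [|exact Hy'].
      unfold tensors in Hy. rewrite map_map in Hy. simpl in Hy. rewrite map_id in Hy.
      right; apply in_or_app; now right. }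
    unfold load_bound in *. lra.
Qed.

(** * The communication pool *)

Lemma fill_start_ge (q : list (R * R)) (t rdy : R) : Rmax t rdy <= fst (fill t rdy q).
Proof.
  revert t. induction q as [|[rel du] q IH]; intros t; simpl;
    destruct (Rle_dec rdy t); simpl; try (rewrite Rmax_left; lra); try (rewrite Rmax_right; lra).
  destruct (Rle_dec rdy (Rmax t rel)); simpl; [rewrite Rmax_right; lra|].
  eapply Rle_trans; [|apply IH]. rewrite (Rmax_right t rdy) by lra. apply Rmax_r.
Qed.

(* A chunk is started only while the pending A2A task is not ready, so it delays that task by at
   most its own duration. *)
Lemma fill_start_le (q : list (R * R)) (t rdy c : R) :
  0 <= c -> (forall p, In p q -> snd p <= c) -> fst (fill t rdy q) <= Rmax t (rdy + c).
Proof.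
  revert t. induction q as [|[rel du] q IH]; intros t Hc Hq; simpl;
    pose proof (Rmax_l t (rdy + c)); pose proof (Rmax_r t (rdy + c));
    destruct (Rle_dec rdy t); simpl; try lra.
  pose proof (Hq (rel, du) (or_introl eq_refl)) as Hdu; simpl in Hdu.
  destruct (Rle_dec rdy (Rmax t rel)); simpl; [lra|].
  eapply Rle_trans; [apply IH; auto; intros p Hp; apply Hq; now right|]. apply Rmax_lub; lra.
Qed.

Lemma fill_suffix (q : list (R * R)) (t rdy : R) : exists pre, q = pre ++ snd (fill t rdy q).
Proof.
  revert t. induction q as [|[rel du] q IH]; intros t; simpl.
  - destruct Rle_dec; now exists [].
  - destruct Rle_dec; [now exists []|]. destruct Rle_dec; [now exists []|].
    destruct (IH (Rmax t rel + du)) as [pre Hpre]. exists ((rel, du) :: pre). simpl; congruence.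
Qed.

Lemma flush_ge (q : list (R * R)) (t : R) : nonneg_jobs q -> t <= flush t q.
Proof.
  revert t. induction q as [|[rel du] q IH]; intros t Hq; simpl; [lra|].
  inversion Hq as [|? ? Hdu Hq']; subst; simpl in Hdu.
  eapply Rle_trans; [|now apply IH]. pose proof (Rmax_l t rel). lra.
Qed.

(* A lower bound on the time by which the communication resource, free from [t] on, has run the
   chunks of [q] released at or after [tau]. *)
Definition drain_time (tau t : R) (q : list (R * R)) : R := Rmax t tau + work_from q tau.

Lemma drain_time_pop (tau t rel du : R) (q : list (R * R)) :
  0 <= du -> drain_time tau t ((rel, du) :: q) <= drain_time tau (Rmax t rel + du) q.
Proof.
  intros Hdu. unfold drain_time; simpl.
  pose proof (Rmax_l t rel). pose proof (Rmax_r t rel).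
  pose proof (Rmax_l (Rmax t rel + du) tau). pose proof (Rmax_r (Rmax t rel + du) tau).
  destruct Rle_dec; unfold Rmax at 1; destruct Rle_dec; lra.
Qed.

Lemma drain_time_wait (tau t s : R) (q : list (R * R)) :
  t <= s -> drain_time tau t q <= drain_time tau s q.
Proof.
  intros Hts. unfold drain_time. enough (Rmax t tau <= Rmax s tau) by lra.
  apply Rmax_lub; [eapply Rle_trans; [exact Hts|apply Rmax_l]|apply Rmax_r].
Qed.

Lemma drain_time_job (tau s a : R) (q : list (R * R)) :
  0 <= a -> drain_time tau s q + (if Rle_dec tau s then a else 0) <= drain_time tau (s + a) q.
Proof.
  intros Ha. unfold drain_time. destruct Rle_dec; unfold Rmax; repeat destruct Rle_dec; lra.
Qed.

Lemma drain_time_release (tau t r : R) (q : list (R * R)) (l : list R) :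
  drain_time tau t (q ++ map (fun du => (r, du)) l) =
  drain_time tau t q + (if Rle_dec tau r then rsum l else 0).
Proof. unfold drain_time. rewrite work_from_app, work_from_batch. ring. Qed.

Lemma drain_time_fill (q : list (R * R)) (t rdy tau : R) :
  nonneg_jobs q -> drain_time tau t q <= drain_time tau (fst (fill t rdy q)) (snd (fill t rdy q)).
Proof.
  revert t. induction q as [|[rel du] q IH]; intros t Hq; simpl.
  - destruct Rle_dec; simpl; [lra|]. apply drain_time_wait; lra.
  - inversion Hq as [|? ? Hdu Hq']; subst; simpl in Hdu.
    destruct Rle_dec; simpl; [lra|]. destruct Rle_dec; simpl.
    + apply drain_time_wait; lra.
    + eapply Rle_trans; [apply drain_time_pop, Hdu|]. now apply IH.
Qed.

Lemma drain_time_flush (q : list (R * R)) (t tau : R) :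
  nonneg_jobs q -> drain_time tau t q <= Rmax (flush t q) tau.
Proof.
  revert t. induction q as [|[rel du] q IH]; intros t Hq; simpl.
  - unfold drain_time; simpl. lra.
  - inversion Hq as [|? ? Hdu Hq']; subst; simpl in Hdu.
    eapply Rle_trans; [apply drain_time_pop, Hdu|]. now apply IH.
Qed.

Lemma StronglySorted_app_batch (q : list (R * R)) (r : R) (l : list R) :
  StronglySorted (fun p p' => fst p <= fst p') q -> (forall p, In p q -> fst p <= r) ->
  StronglySorted (fun p p' => fst p <= fst p') (q ++ map (fun du => (r, du)) l).
Proof.
  induction q as [|p q IH]; simpl; intros Hs Hq.
  - induction l as [|x l IHl]; simpl; constructor; auto.
    apply Forall_forall. intros p' Hp'. apply in_map_iff in Hp' as (y & <- & _). simpl; lra.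
  - apply StronglySorted_inv in Hs as [Hs Hhead]. constructor; [now apply IH; auto|].
    apply Forall_app. split; [exact Hhead|]. apply Forall_forall.
    intros p' Hp'. apply in_map_iff in Hp' as (y & <- & _). simpl. now apply Hq; left.
Qed.

(* [t] is the time the communication resource becomes free and [q] its pending chunks. The
   resource has been busy since some event [tau] with work released at or after [tau] only, which
   bounds [t + total_work q] by [load_bound tau]. *)
Record busy_period (W : R) (As : list (R * R)) (Bs : list R) (t : R) (q : list (R * R)) : Prop := {
  busy_since : exists tau,
    In tau (events As Bs) /\ tau <= t /\ t + total_work q <= load_bound W As Bs tau;
  busy_sorted : StronglySorted (fun p p' => fst p <= fst p') q;
  busy_queue_le_tensors : forall x, work_from q x <= work_from (tensors W Bs) x;
  busy_released : forall p, In p q -> In (fst p) Bs;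
  busy_nonneg : nonneg_jobs q }.

Section BusyPeriod.
Variables (W : R) (As : list (R * R)) (Bs : list R).
Hypothesis (HAs : nonneg_jobs As).

Lemma busy_period_pop (t rel du : R) (q : list (R * R)) :
  busy_period W As Bs t ((rel, du) :: q) -> busy_period W As Bs (Rmax t rel + du) q.
Proof.
  intros [(tau & Hin & Ht & Hle) Hs HqB Hrel Hnn].
  apply StronglySorted_inv in Hs as [Hs Hhead].
  inversion Hnn as [|? ? Hdu Hnn']; subst; simpl in Hdu.
  assert (Hrel0 : In rel Bs) by exact (Hrel (rel, du) (or_introl eq_refl)).
  split; auto.
  - destruct (Rle_dec rel t).
    + rewrite Rmax_left by lra. exists tau.
      change (t + (du + total_work q) <= load_bound W As Bs tau) in Hle. repeat split; auto; lra.
    + rewrite Rmax_right by lra. exists rel. split; [now apply events_release|split; [lra|]].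
      specialize (HqB rel). simpl in HqB. destruct (Rle_dec rel rel); [|lra].
      rewrite (work_from_all q rel Hhead) in HqB.
      pose proof (work_from_nonneg As rel HAs). unfold load_bound. lra.
  - intros x. specialize (HqB x). simpl in HqB. destruct Rle_dec; lra.
  - intros p Hp. apply Hrel. now right.
Qed.

Lemma busy_period_continue (t a : R) (q : list (R * R)) :
  0 <= a -> busy_period W As Bs t q -> busy_period W ((t, a) :: As) Bs (t + a) q.
Proof.
  intros Ha [(tau & Hin & Ht & Hle) Hs HqB Hrel Hnn]. split; auto.
  exists tau. split; [now apply events_cons|split; [lra|]].
  rewrite load_bound_cons. destruct Rle_dec; lra.
Qed.

Lemma busy_period_restart (t s a : R) (q : list (R * R)) :
  0 <= a -> Forall (fun p => s <= fst p) q ->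
  busy_period W As Bs t q -> busy_period W ((s, a) :: As) Bs (s + a) q.
Proof.
  intros Ha Hq [_ Hs HqB Hrel Hnn]. split; auto.
  exists s. split; [apply events_head|split; [lra|]].
  rewrite load_bound_cons. destruct (Rle_dec s s); [|lra].
  rewrite <- (work_from_all q s Hq). specialize (HqB s).
  pose proof (work_from_nonneg As s HAs). unfold load_bound. lra.
Qed.

Lemma flush_le_load_bound (t : R) (q : list (R * R)) :
  busy_period W As Bs t q -> flush t q <= max_load_bound W As Bs.
Proof.
  revert t. induction q as [|[rel du] q IH]; intros t Hb; cbn [flush].
  - destruct Hb as [(tau & Hin & Ht & Hle) _ _ _ _]. unfold total_work in Hle; simpl in Hle.
    eapply Rle_trans; [|apply load_bound_le_max, Hin]. lra.
  - now apply IH, busy_period_pop.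
Qed.

Lemma busy_period_fill (a rdy t : R) (q : list (R * R)) :
  0 <= a -> busy_period W As Bs t q ->
  busy_period W ((fst (fill t rdy q), a) :: As) Bs (fst (fill t rdy q) + a) (snd (fill t rdy q)).
Proof.
  intros Ha. revert t. induction q as [|[rel du] q IH]; intros t Hb; simpl.
  - destruct Rle_dec; simpl.
    + now apply busy_period_continue.
    + apply busy_period_restart with (t := t); auto.
  - destruct (Rle_dec rdy t); simpl; [now apply busy_period_continue|].
    destruct (Rle_dec rdy (Rmax t rel)) as [Hrdy|Hrdy]; simpl.
    + apply busy_period_restart with (t := t); auto.
      assert (rdy <= rel) by (unfold Rmax in Hrdy; destruct Rle_dec; lra).
      pose proof (busy_sorted _ _ _ _ _ Hb) as Hs. apply StronglySorted_inv in Hs as [_ Hhead].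
      constructor; [simpl; lra|]. eapply Forall_impl; [|exact Hhead]. simpl; intros; lra.
    + now apply IH, busy_period_pop.
Qed.

End BusyPeriod.

Lemma busy_period_release (W : R) (As : list (R * R)) (Bs : list R) (t r : R) (q : list (R * R))
    (chunks : list R) :
  t <= r -> (forall p, In p q -> fst p <= r) -> Forall (fun du => 0 <= du) chunks ->
  rsum chunks = W -> busy_period W As Bs t q ->
  busy_period W As (r :: Bs) t (q ++ map (fun du => (r, du)) chunks).
Proof.
  intros Htr Hq Hchunks HW [(tau & Hin & Ht & Hle) Hs HqB Hrel Hnn]. split.
  - exists tau. split; [now apply events_release_cons|split; [exact Ht|]].
    rewrite total_work_app, total_work_batch, load_bound_release.
    destruct (Rle_dec tau r); lra.
  - now apply StronglySorted_app_batch.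
  - intros x. rewrite work_from_app, work_from_batch. specialize (HqB x). simpl.
    destruct Rle_dec; lra.
  - intros p Hp. apply in_app_or in Hp as [Hp|Hp]; [right; auto|].
    apply in_map_iff in Hp as (du & <- & _). now left.
  - apply Forall_app. split; [exact Hnn|]. apply Forall_forall.
    intros p Hp. apply in_map_iff in Hp as (du & <- & Hdu). simpl.
    now apply (proj1 (Forall_forall _ _) Hchunks).
Qed.

(** * The instrumented simulation *)

(* Besides the state, we log every A2A task run, as (start, duration), and the release time of
   every all-reduce tensor. *)
Record logged := mkLogged { cur : state; a2a_log : list (R * R); release_log : list R }.

Definition log_release (rel : option R) (Bs : list R) : list R :=
  match rel with Some r => r :: Bs | None => Bs end.

Section Step.
Variables (L Rp : nat) (d : durations) (Sp : R).

Definition released (fc : comp_task -> option R) (c : comp_task) : option R :=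
  match c with
  | AT l _ => if block_done Rp fc l then Some (block_release Rp fc l) else None
  | E _ _ => None
  end.

Definition enqueue (q : list (R * R)) (rel : option R) : list (R * R) :=
  match rel with Some r => q ++ map (fun du => (r, du)) (chunk_durs d Sp) | None => q end.

Definition run_comp (st : state) (c : comp_task) (cs : list comp_task) (fd : R) :
  state * option R :=
  let fin := Rmax (free_comp st) fd + comp_dur d c in
  let fc := upd_comp (fin_comp st) c fin in
  (mkState cs (rem_comm st) fc (fin_comm st) fin (free_comm st)
     (enqueue (queue st) (released fc c)),
   released fc c).

Definition comp_step (st : state) : option (state * option R) :=
  match rem_comp st with
  | c :: cs =>
      match fin_comm st (comp_dep c) with
      | Some fd => Some (run_comp st c cs fd)
      | None => None
      end
  | [] => None
  end.

Definition a2a_ready (st : state) (a : comm_task) : option R :=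
  match a2a_dep L a with None => Some 0 | Some c => fin_comp st c end.

Definition run_comm (st : state) (a : comm_task) (as_ : list comm_task) (rdy : R) :
  state * (R * R) :=
  let start := fst (fill (free_comm st) rdy (queue st)) in
  let fin := start + comm_dur d a in
  (mkState (rem_comp st) as_ (fin_comp st) (upd_comm (fin_comm st) a fin) (free_comp st) fin
     (snd (fill (free_comm st) rdy (queue st))),
   (start, comm_dur d a)).

Definition comm_step (st : state) : option (state * (R * R)) :=
  match rem_comm st with
  | a :: as_ =>
      match a2a_ready st a with
      | Some rdy => Some (run_comm st a as_ rdy)
      | None => None
      end
  | [] => None
  end.

Definition step (e : logged) : option logged :=
  match comp_step (cur e) with
  | Some (st', rel) => Some (mkLogged st' (a2a_log e) (log_release rel (release_log e)))
  | None =>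
      match comm_step (cur e) with
      | Some (st', job) => Some (mkLogged st' (job :: a2a_log e) (release_log e))
      | None => None
      end
  end.

Fixpoint run (fuel : nat) (e : logged) : logged :=
  match fuel with
  | O => e
  | S fuel' => match step e with Some e' => run fuel' e' | None => e end
  end.

Lemma simulate_run (fuel : nat) (st : state) (As : list (R * R)) (Bs : list R) :
  simulate L Rp d Sp fuel st = final_time (cur (run fuel (mkLogged st As Bs))).
Proof.
  revert st As Bs. induction fuel as [|fuel IH]; intros st As Bs; [reflexivity|].
  cbn [simulate run]. unfold step, comp_step, comm_step, a2a_ready, run_comp, run_comm; simpl.
  destruct (rem_comp st) as [|c cs].
  - destruct (rem_comm st) as [|a as_]; [reflexivity|].
    destruct (match a2a_dep L a with None => Some 0 | Some c => fin_comp st c end);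
      [|reflexivity].
    destruct (fill (free_comm st) r (queue st)). apply IH.
  - destruct (fin_comm st (comp_dep c)) as [fd|].
    + destruct c as [l r|l r]; simpl; [apply IH|].
      destruct block_done; apply IH.
    + destruct (rem_comm st) as [|a as_]; [reflexivity|].
      destruct (match a2a_dep L a with None => Some 0 | Some c => fin_comp st c end);
      [|reflexivity].
      destruct (fill (free_comm st) r (queue st)). apply IH.
Qed.

Lemma comp_step_Some (st st' : state) (rel : option R) :
  comp_step st = Some (st', rel) ->
  exists c cs fd, rem_comp st = c :: cs /\ fin_comm st (comp_dep c) = Some fd /\
    run_comp st c cs fd = (st', rel).
Proof.
  unfold comp_step. destruct (rem_comp st) as [|c cs]; [discriminate|].
  destruct (fin_comm st (comp_dep c)) as [fd|] eqn:Hfd; [|discriminate].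
  intros H. exists c, cs, fd. repeat split; [assumption|congruence].
Qed.

Lemma comm_step_Some (st st' : state) (job : R * R) :
  comm_step st = Some (st', job) ->
  exists a as_ rdy, rem_comm st = a :: as_ /\ a2a_ready st a = Some rdy /\
    run_comm st a as_ rdy = (st', job).
Proof.
  unfold comm_step. destruct (rem_comm st) as [|a as_]; [discriminate|].
  destruct (a2a_ready st a) as [rdy|] eqn:Hrdy; [|discriminate].
  intros H. exists a, as_, rdy. repeat split; [assumption|congruence].
Qed.

Lemma comp_step_None (st : state) :
  comp_step st = None ->
  match rem_comp st with c :: _ => fin_comm st (comp_dep c) = None | [] => True end.
Proof.
  unfold comp_step. destruct (rem_comp st) as [|c cs]; [auto|].
  now destruct (fin_comm st (comp_dep c)).
Qed.

End Step.

Lemma comp_eqb_refl (c : comp_task) : comp_eqb c c = true.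
Proof. destruct c; simpl; now rewrite !Nat.eqb_refl. Qed.

Lemma block_release_ge (Rp : nat) (f : comp_task -> option R) (l r : nat) (x : R) :
  In r (seq 1 Rp) -> f (AT l r) = Some x -> x <= block_release Rp f l.
Proof.
  unfold block_release. induction (seq 1 Rp) as [|r' rs IH]; simpl; [tauto|]. intros [<-|Hr] Hf.
  - rewrite Hf. apply Rmax_l.
  - destruct (f (AT l r')); [eapply Rle_trans; [now apply IH|apply Rmax_r]|auto].
Qed.

Lemma block_release_le (Rp : nat) (f : comp_task -> option R) (l : nat) (M : R) :
  0 <= M -> (forall c x, f c = Some x -> x <= M) -> block_release Rp f l <= M.
Proof.
  intros HM Hf. unfold block_release. induction (seq 1 Rp) as [|r rs IH]; simpl; [lra|].
  destruct (f (AT l r)) eqn:E; [apply Rmax_lub; [eapply Hf; eauto|auto]|auto].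
Qed.

Lemma block_done_late (D : R) (Rp : nat) (f f0 : comp_task -> option R) (l : nat) :
  (forall c, late_opt D (f c) (f0 c)) -> block_done Rp f l = block_done Rp f0 l.
Proof.
  intros H. unfold block_done. induction (seq 1 Rp) as [|r rs IH]; simpl; auto.
  rewrite IH. specialize (H (AT l r)). destruct (f (AT l r)), (f0 (AT l r)); simpl in *; tauto.
Qed.

Lemma block_release_late (D : R) (Rp : nat) (f f0 : comp_task -> option R) (l : nat) :
  0 <= D -> (forall c, late_opt D (f c) (f0 c)) ->
  late D (block_release Rp f l) (block_release Rp f0 l).
Proof.
  intros HD H. unfold block_release. induction (seq 1 Rp) as [|r rs IH]; simpl; [unfold late; lra|].
  specialize (H (AT l r)). destruct (f (AT l r)), (f0 (AT l r)); simpl in *; try tauto.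
  now apply Rmax_late.
Qed.

Lemma released_at_finish (Rp : nat) (fc : comp_task -> option R) (c : comp_task) (fin r : R) :
  (forall l i, c = AT l i -> In i (seq 1 Rp)) -> fc c = Some fin -> 0 <= fin ->
  (forall c' x, fc c' = Some x -> x <= fin) -> released Rp fc c = Some r -> r = fin.
Proof.
  intros Hidx Hc Hfin Hall. destruct c as [l i|l i]; simpl; [discriminate|].
  destruct block_done; [intros [= <-]|discriminate].
  apply Rle_antisym; [now apply block_release_le|].
  apply (block_release_ge Rp fc l i); [now apply (Hidx l i)|exact Hc].
Qed.

(** * Invariants of a run *)

Section Invariant.
Variables (L Rp : nat) (d : durations) (Sp c : R).
Hypotheses (Hcomp : forall x, 0 <= comp_dur d x) (Hcomm : forall a, 0 <= comm_dur d a)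
  (Hchunk : forall du, In du (chunk_durs d Sp) -> 0 <= du <= c).

Let W := rsum (chunk_durs d Sp).

Lemma chunks_nonneg : Forall (fun du => 0 <= du) (chunk_durs d Sp).
Proof. apply Forall_forall. intros du Hdu. apply (Hchunk du Hdu). Qed.

Lemma allreduce_work_nonneg : 0 <= W.
Proof. apply rsum_nonneg, chunks_nonneg. Qed.

Record inv (e : logged) : Prop := {
  (* an A2A task is only run when the next computing task is blocked *)
  inv_next_comp : match rem_comp (cur e) with
    | c0 :: _ => forall fd, fin_comm (cur e) (comp_dep c0) = Some fd ->
                 free_comm (cur e) <= Rmax (free_comp (cur e)) fd
    | [] => True
    end;
  inv_rem_AT : forall l r, In (AT l r) (rem_comp (cur e)) -> In r (seq 1 Rp);
  inv_free_comp : 0 <= free_comp (cur e);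
  inv_fin_comp : forall c0 x, fin_comp (cur e) c0 = Some x -> x <= free_comp (cur e);
  inv_queue : forall p, In p (queue (cur e)) -> fst p <= free_comp (cur e) /\ snd p <= c;
  inv_a2a_nonneg : nonneg_jobs (a2a_log e);
  inv_busy : busy_period W (a2a_log e) (release_log e) (free_comm (cur e)) (queue (cur e));
  inv_load : forall tau,
    load_bound W (a2a_log e) (release_log e) tau <=
    drain_time tau (free_comm (cur e)) (queue (cur e));
  inv_a2a_log : forall p, In p (a2a_log e) -> fst p <= free_comm (cur e);
  inv_release_log : forall r, In r (release_log e) -> r <= free_comp (cur e) }.

Lemma inv_comp_step (st st' : state) (As : list (R * R)) (Bs : list R) (rel : option R) :
  inv (mkLogged st As Bs) -> comp_step Rp d Sp st = Some (st', rel) ->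
  inv (mkLogged st' As (log_release rel Bs)).
Proof.
  intros Hs Hstep.
  destruct (comp_step_Some Rp d Sp st st' rel Hstep) as (c0 & cs & fd & Hrc & Hfd & Hrun).
  unfold run_comp in Hrun.
  set (fin := Rmax (free_comp st) fd + comp_dur d c0) in Hrun.
  set (fc := upd_comp (fin_comp st) c0 fin) in Hrun.
  injection Hrun as <- <-.
  destruct Hs as [Hnext HAT Hfree Hfin Hq HAn Hbusy Hload HAlog HBlog]; simpl in *.
  rewrite Hrc in Hnext, HAT. specialize (Hnext fd Hfd).
  pose proof (Hcomp c0). pose proof (Rmax_l (free_comp st) fd).
  assert (Hcomm_fin : free_comm st <= fin) by (unfold fin; lra).
  assert (Hcomp_fin : free_comp st <= fin) by (unfold fin; lra).
  assert (Hfc : forall c1 x, fc c1 = Some x -> x <= fin).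
  { intros c1 x. unfold fc, upd_comp. destruct (comp_eqb c0 c1).
    - intros [= <-]. lra.
    - intros Hx. apply Hfin in Hx. lra. }
  assert (Hrel : forall r, released Rp fc c0 = Some r -> r = fin).
  { intros r. apply (released_at_finish Rp fc c0 fin r); [| |lra|exact Hfc].
    - intros l i ->. apply (HAT l). now left.
    - unfold fc, upd_comp. now rewrite comp_eqb_refl. }
  assert (Hnext' : match cs with
                   | c1 :: _ => forall fd', fin_comm st (comp_dep c1) = Some fd' ->
                                free_comm st <= Rmax fin fd'
                   | [] => True end).
  { destruct cs; [exact I|]. intros fd' _. eapply Rle_trans; [exact Hcomm_fin|apply Rmax_l]. }
  assert (HAT' : forall l r, In (AT l r) cs -> In r (seq 1 Rp))
    by (intros l r Hin; apply (HAT l r); now right).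
  destruct (released Rp fc c0) as [r|]; simpl.
  - specialize (Hrel r eq_refl). subst r. split; simpl; auto; [lra| | | |].
    + intros p Hp. apply in_app_or in Hp as [Hp|Hp].
      * specialize (Hq p Hp). lra.
      * apply in_map_iff in Hp as (du & <- & Hdu). simpl. split; [lra|apply (Hchunk du Hdu)].
    + apply busy_period_release; auto using chunks_nonneg.
      intros p Hp. specialize (Hq p Hp). lra.
    + intros tau. specialize (Hload tau).
      rewrite drain_time_release, load_bound_release. fold W. destruct Rle_dec; lra.
    + intros r [<-|Hr]; [lra|]. specialize (HBlog r Hr). lra.
  - split; simpl; auto; [lra| |].
    + intros p Hp. specialize (Hq p Hp). lra.
    + intros r Hr. specialize (HBlog r Hr). lra.
Qed.

Lemma inv_comm_step (st st' : state) (As : list (R * R)) (Bs : list R) (job : R * R) :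
  inv (mkLogged st As Bs) -> comp_step Rp d Sp st = None -> comm_step L d st = Some (st', job) ->
  inv (mkLogged st' (job :: As) Bs).
Proof.
  intros Hs Hblocked Hstep.
  destruct (comm_step_Some L d st st' job Hstep) as (a & as_ & rdy & _ & _ & Hrun).
  unfold run_comm in Hrun. injection Hrun as <- <-.
  apply comp_step_None in Hblocked.
  destruct Hs as [Hnext HAT Hfree Hfin Hq HAn Hbusy Hload HAlog HBlog]; simpl in *.
  set (s := fst (fill (free_comm st) rdy (queue st))) in *.
  set (q' := snd (fill (free_comm st) rdy (queue st))) in *.
  pose proof (Hcomm a) as Ha.
  pose proof (fill_start_ge (queue st) (free_comm st) rdy) as Hstart. fold s in Hstart.
  pose proof (Rmax_l (free_comm st) rdy).
  pose proof (busy_nonneg _ _ _ _ _ Hbusy) as Hqn.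
  split; simpl; auto.
  - destruct (rem_comp st) as [|c0 cs]; [exact I|]. intros fd. unfold upd_comm.
    destruct (comm_eqb a (comp_dep c0)); [intros [= <-]; apply Rmax_r|congruence].
  - intros p Hp. apply Hq. destruct (fill_suffix (queue st) (free_comm st) rdy) as [pre ->].
    apply in_or_app. now right.
  - now constructor.
  - now apply busy_period_fill.
  - intros tau. rewrite load_bound_cons. specialize (Hload tau).
    pose proof (drain_time_fill (queue st) (free_comm st) rdy tau Hqn) as Hfill. fold s q' in Hfill.
    pose proof (drain_time_job tau s (comm_dur d a) q' Ha). lra.
  - intros p [<-|Hp]; simpl; [lra|]. specialize (HAlog p Hp). lra.
Qed.

Lemma inv_step (e e' : logged) : inv e -> step L Rp d Sp e = Some e' -> inv e'.
Proof.
  destruct e as [st As Bs]. unfold step; simpl. intros Hs.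
  destruct (comp_step Rp d Sp st) as [[st' rel]|] eqn:Hcomp_step.
  - intros [= <-]. now apply (inv_comp_step st).
  - destruct (comm_step L d st) as [[st' job]|] eqn:Hcomm_step; [|discriminate].
    intros [= <-]. now apply (inv_comm_step st).
Qed.

Lemma inv_run (fuel : nat) (e : logged) : inv e -> inv (run L Rp d Sp fuel e).
Proof.
  revert e. induction fuel as [|fuel IH]; intros e Hs; simpl; [exact Hs|].
  destruct (step L Rp d Sp e) eqn:Hstep; [|exact Hs]. eapply IH, inv_step; eauto.
Qed.

Lemma inv_init : inv (mkLogged (init_state L Rp) [] []).
Proof.
  split; simpl; try (intros; discriminate); try tauto; try lra.
  - destruct (comp_order L Rp); [exact I|discriminate].
  - intros l r Hin. unfold comp_order in Hin. apply in_flat_map in Hin as (l' & _ & Hin).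
    apply in_app_or in Hin as [Hin|Hin]; apply in_map_iff in Hin as (r' & Hr' & Hin);
      [discriminate|]. injection Hr' as -> ->. unfold down in Hin. now apply in_rev.
  - constructor.
  - split; simpl; [|constructor|intros; lra|tauto|constructor].
    exists 0. split; [now left|split; [lra|]]. unfold load_bound, total_work; simpl; lra.
  - intros tau. unfold load_bound, drain_time; simpl. pose proof (Rmax_r 0 tau). lra.
Qed.

End Invariant.

(** * Coupling with the schedule with instantaneous all-reduce *)

Record coupled (D : R) (e e0 : logged) : Prop := {
  coupled_rem_comp : rem_comp (cur e) = rem_comp (cur e0);
  coupled_rem_comm : rem_comm (cur e) = rem_comm (cur e0);
  coupled_fin_comp : forall c, late_opt D (fin_comp (cur e) c) (fin_comp (cur e0) c);
  coupled_fin_comm : forall a, late_opt D (fin_comm (cur e) a) (fin_comm (cur e0) a);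
  coupled_free_comp : late D (free_comp (cur e)) (free_comp (cur e0));
  coupled_free_comm : late D (free_comm (cur e)) (free_comm (cur e0));
  coupled_a2a : delayed D (a2a_log e) (a2a_log e0);
  coupled_release : Forall2 (late D) (release_log e) (release_log e0) }.

Lemma coupled_weaken (D D' : R) (e e0 : logged) : D <= D' -> coupled D e e0 -> coupled D' e e0.
Proof.
  intros HD [? ? Hfc Hfm ? ? ? ?]. split; auto.
  - intros c. now apply (late_opt_weaken D).
  - intros a. now apply (late_opt_weaken D).
  - now apply (late_weaken D).
  - now apply (late_weaken D).
  - now apply (delayed_weaken D).
  - now apply (Forall2_late_weaken D).
Qed.

Lemma coupled_init (L Rp : nat) :
  coupled 0 (mkLogged (init_state L Rp) [] []) (mkLogged (init_state L Rp) [] []).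
Proof. split; simpl; auto; try (unfold late; lra); constructor. Qed.

Section Coupling.
Variables (L Rp : nat) (d d0 : durations) (Sp Sp0 c : R).
Hypotheses (Hcomp_eq : forall x, comp_dur d x = comp_dur d0 x)
  (Hcomm_eq : forall a, comm_dur d a = comm_dur d0 a) (Hc : 0 <= c).

Lemma comp_step_coupled (D : R) (st st0 : state) (As As0 : list (R * R)) (Bs Bs0 : list R) :
  0 <= D -> coupled D (mkLogged st As Bs) (mkLogged st0 As0 Bs0) ->
  match comp_step Rp d Sp st, comp_step Rp d0 Sp0 st0 with
  | Some (st', rel), Some (st0', rel0) =>
      coupled D (mkLogged st' As (log_release rel Bs)) (mkLogged st0' As0 (log_release rel0 Bs0))
  | None, None => True
  | _, _ => False
  end.
Proof.
  intros HD [Hrc Hrm Hfc Hfm Htc Htm HA HB]; simpl in *.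
  unfold comp_step. rewrite <- Hrc. destruct (rem_comp st) as [|c0 cs]; [exact I|].
  specialize (Hfm (comp_dep c0)) as Hfd.
  destruct (fin_comm st (comp_dep c0)) as [fd|], (fin_comm st0 (comp_dep c0)) as [fd0|];
    simpl in Hfd; try tauto.
  unfold run_comp. rewrite <- Hcomp_eq.
  set (fin := Rmax (free_comp st) fd + comp_dur d c0).
  set (fin0 := Rmax (free_comp st0) fd0 + comp_dur d c0).
  assert (Hfin : late D fin fin0).
  { pose proof (Rmax_late D _ _ _ _ Htc Hfd). unfold fin, fin0, late in *. lra. }
  assert (Hfc' : forall c1,
    late_opt D (upd_comp (fin_comp st) c0 fin c1) (upd_comp (fin_comp st0) c0 fin0 c1)).
  { intros c1. unfold upd_comp. now destruct (comp_eqb c0 c1). }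
  assert (Hrel : late_opt D (released Rp (upd_comp (fin_comp st) c0 fin) c0)
                            (released Rp (upd_comp (fin_comp st0) c0 fin0) c0)).
  { destruct c0 as [l r|l r]; simpl; [exact I|].
    rewrite (block_done_late D Rp _ _ l Hfc').
    destruct block_done; simpl; [now apply block_release_late|exact I]. }
  destruct (released Rp (upd_comp (fin_comp st) c0 fin) c0) as [r|],
    (released Rp (upd_comp (fin_comp st0) c0 fin0) c0) as [r0|]; simpl in Hrel; try tauto;
    split; simpl; auto.
Qed.

Lemma comm_step_coupled (D : R) (st st0 : state) (As As0 : list (R * R)) (Bs Bs0 : list R) :
  0 <= D -> (forall p, In p (queue st) -> snd p <= c) ->
  (forall p, In p (queue st0) -> snd p <= 0) ->
  coupled D (mkLogged st As Bs) (mkLogged st0 As0 Bs0) ->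
  match comm_step L d st, comm_step L d0 st0 with
  | Some (st', job), Some (st0', job0) =>
      coupled (D + c) (mkLogged st' (job :: As) Bs) (mkLogged st0' (job0 :: As0) Bs0)
  | None, None => True
  | _, _ => False
  end.
Proof.
  intros HD Hq Hq0 [Hrc Hrm Hfc Hfm Htc Htm HA HB]; simpl in *.
  unfold comm_step. rewrite <- Hrm. destruct (rem_comm st) as [|a as_]; [exact I|].
  assert (Hrdy : late_opt D (a2a_ready L st a) (a2a_ready L st0 a)).
  { unfold a2a_ready. destruct (a2a_dep L a); [apply Hfc|simpl; unfold late; lra]. }
  destruct (a2a_ready L st a) as [rdy|], (a2a_ready L st0 a) as [rdy0|]; simpl in Hrdy; try tauto.
  unfold run_comm. rewrite <- Hcomm_eq.
  assert (Hstart : late (D + c) (fst (fill (free_comm st) rdy (queue st)))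
                            (fst (fill (free_comm st0) rdy0 (queue st0)))).
  { pose proof (fill_start_ge (queue st) (free_comm st) rdy).
    pose proof (fill_start_le (queue st) (free_comm st) rdy c Hc Hq).
    pose proof (fill_start_ge (queue st0) (free_comm st0) rdy0).
    pose proof (fill_start_le (queue st0) (free_comm st0) rdy0 0 (Rle_refl 0) Hq0).
    pose proof (Rmax_late D _ _ _ _ Htm Hrdy).
    assert (Rmax (free_comm st) (rdy + c) <= Rmax (free_comm st) rdy + c)
      by (unfold Rmax; repeat destruct Rle_dec; lra).
    rewrite Rplus_0_r in *. unfold late in *. lra. }
  assert (HDc : D <= D + c) by lra.
  split; simpl; auto.
  - intros c1. now apply (late_opt_weaken D).
  - intros a1. unfold upd_comm. destruct (comm_eqb a a1); simpl.
    + unfold late in *; lra.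
    + now apply (late_opt_weaken D).
  - now apply (late_weaken D).
  - unfold late in *; lra.
  - constructor; [split; [reflexivity|exact Hstart]|]. now apply (delayed_weaken D).
  - now apply (Forall2_late_weaken D).
Qed.

Hypotheses (Hcomp : forall x, 0 <= comp_dur d x) (Hcomm : forall a, 0 <= comm_dur d a)
  (Hchunk : forall du, In du (chunk_durs d Sp) -> 0 <= du <= c)
  (Hchunk0 : forall du, In du (chunk_durs d0 Sp0) -> 0 <= du <= 0).

Lemma step_coupled (D : R) (e e0 : logged) :
  0 <= D -> inv Rp d Sp c e -> inv Rp d0 Sp0 0 e0 -> coupled D e e0 ->
  match step L Rp d Sp e, step L Rp d0 Sp0 e0 with
  | Some e', Some e0' => coupled (D + c) e' e0'
  | None, None => True
  | _, _ => False
  end.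
Proof.
  destruct e as [st As Bs], e0 as [st0 As0 Bs0]. intros HD Hs Hs0 Hcp.
  pose proof (comp_step_coupled D st st0 As As0 Bs Bs0 HD Hcp) as Hcs.
  unfold step; simpl.
  destruct (comp_step Rp d Sp st) as [[st' rel]|], (comp_step Rp d0 Sp0 st0) as [[st0' rel0]|];
    try tauto.
  - apply (coupled_weaken D); [lra|exact Hcs].
  - assert (Hq : forall p, In p (queue st) -> snd p <= c)
      by (intros p Hp; apply (inv_queue _ _ _ _ _ Hs p Hp)).
    assert (Hq0 : forall p, In p (queue st0) -> snd p <= 0)
      by (intros p Hp; apply (inv_queue _ _ _ _ _ Hs0 p Hp)).
    pose proof (comm_step_coupled D st st0 As As0 Bs Bs0 HD Hq Hq0 Hcp) as Hms.
    destruct (comm_step L d st) as [[st' job]|], (comm_step L d0 st0) as [[st0' job0]|]; tauto.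
Qed.

Lemma run_coupled (fuel : nat) (D : R) (e e0 : logged) :
  0 <= D -> inv Rp d Sp c e -> inv Rp d0 Sp0 0 e0 -> coupled D e e0 ->
  coupled (D + INR fuel * c) (run L Rp d Sp fuel e) (run L Rp d0 Sp0 fuel e0).
Proof.
  assert (Hcomp0 : forall x, 0 <= comp_dur d0 x) by (intros x; rewrite <- Hcomp_eq; apply Hcomp).
  assert (Hcomm0 : forall a, 0 <= comm_dur d0 a) by (intros a; rewrite <- Hcomm_eq; apply Hcomm).
  revert D e e0. induction fuel as [|fuel IH]; intros D e e0 HD Hs Hs0 Hcp; simpl run.
  - now rewrite Rmult_0_l, Rplus_0_r.
  - pose proof (step_coupled D e e0 HD Hs Hs0 Hcp) as Hstep. rewrite S_INR.
    destruct (step L Rp d Sp e) as [e'|] eqn:He, (step L Rp d0 Sp0 e0) as [e0'|] eqn:He0; try tauto.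
    + replace (D + (INR fuel + 1) * c) with (D + c + INR fuel * c) by ring.
      apply IH; [lra|eapply inv_step; eauto|eapply inv_step; eauto|exact Hstep].
    + apply (coupled_weaken D); [pose proof (pos_INR fuel); nra|exact Hcp].
Qed.

End Coupling.

(** * Bounds on the makespan *)

Definition makespan_bound (W : R) (e : logged) : R :=
  Rmax (free_comp (cur e)) (max_load_bound W (a2a_log e) (release_log e)).

Section Makespan.
Variables (Rp : nat) (d : durations) (Sp c : R) (e : logged).
Hypothesis (Hchunk : forall du, In du (chunk_durs d Sp) -> 0 <= du <= c).
Hypothesis (Hs : inv Rp d Sp c e).

Let W := rsum (chunk_durs d Sp).

Lemma final_time_le_makespan_bound : final_time (cur e) <= makespan_bound W e.
Proof.
  unfold final_time, makespan_bound. apply Rmax_lub; [apply Rmax_l|].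
  eapply Rle_trans; [|apply Rmax_r].
  apply flush_le_load_bound; apply Hs.
Qed.

Lemma load_bound_le_final_time (tau : R) :
  tau <= final_time (cur e) -> load_bound W (a2a_log e) (release_log e) tau <= final_time (cur e).
Proof.
  intros Htau. eapply Rle_trans; [apply Hs|].
  eapply Rle_trans; [apply drain_time_flush, (busy_nonneg _ _ _ _ _ (inv_busy _ _ _ _ _ Hs))|].
  apply Rmax_lub; [apply Rmax_r|exact Htau].
Qed.

Lemma events_le_final_time (tau : R) :
  In tau (events (a2a_log e) (release_log e)) -> tau <= final_time (cur e).
Proof.
  pose proof (Rmax_l (free_comp (cur e)) (flush (free_comm (cur e)) (queue (cur e)))).
  pose proof (Rmax_r (free_comp (cur e)) (flush (free_comm (cur e)) (queue (cur e)))).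
  pose proof (flush_ge (queue (cur e)) (free_comm (cur e))
                (busy_nonneg _ _ _ _ _ (inv_busy _ _ _ _ _ Hs))).
  pose proof (inv_free_comp _ _ _ _ _ Hs).
  unfold final_time. intros [<-|Hin]; [lra|]. apply in_app_or in Hin as [Hin|Hin].
  - apply in_map_iff in Hin as (p & <- & Hp). pose proof (inv_a2a_log _ _ _ _ _ Hs p Hp). lra.
  - pose proof (inv_release_log _ _ _ _ _ Hs tau Hin). lra.
Qed.

Lemma makespan_bound_le_final_time (D : R) (e0 : logged) :
  0 <= D -> coupled D e e0 -> makespan_bound W e0 <= final_time (cur e).
Proof.
  intros HD Hcp. pose proof (allreduce_work_nonneg d Sp c Hchunk) as HW.
  unfold makespan_bound. apply Rmax_lub.
  - pose proof (coupled_free_comp _ _ _ Hcp). unfold late, final_time in *.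
    pose proof (Rmax_l (free_comp (cur e)) (flush (free_comm (cur e)) (queue (cur e)))). lra.
  - apply max_load_bound_lub; [apply events_le_final_time; now left|].
    intros tau Htau.
    destruct (late_counterpart_below D _ _ tau
      (events_late D _ _ _ _ HD (coupled_a2a _ _ _ Hcp) (coupled_release _ _ _ Hcp)) Htau)
      as (tau' & Hin' & Hle').
    pose proof (events_le_final_time tau' Hin').
    apply Rle_trans with (load_bound W (a2a_log e) (release_log e) tau).
    + apply (load_bound_delayed_ge D); [exact HW|apply Hs|apply Hcp|apply Hcp].
    + apply load_bound_le_final_time. lra.
Qed.

End Makespan.

Lemma makespan_bound_coupled (D W : R) (e e0 : logged) :
  0 <= W -> 0 <= D -> nonneg_jobs (a2a_log e) -> coupled D e e0 ->
  makespan_bound W e <= makespan_bound W e0 + D.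
Proof.
  intros HW HD HAn Hcp. unfold makespan_bound.
  pose proof (max_load_bound_nonneg W (a2a_log e0) (release_log e0)).
  pose proof (Rmax_l (free_comp (cur e0)) (max_load_bound W (a2a_log e0) (release_log e0))).
  pose proof (Rmax_r (free_comp (cur e0)) (max_load_bound W (a2a_log e0) (release_log e0))).
  apply Rmax_lub.
  - pose proof (coupled_free_comp _ _ _ Hcp). unfold late in *. lra.
  - apply max_load_bound_lub; [lra|]. intros tau Htau.
    pose proof (load_bound_delayed_le D W _ _ _ _ tau HW HD HAn
                  (coupled_a2a _ _ _ Hcp) (coupled_release _ _ _ Hcp) Htau).
    lra.
Qed.

Lemma chunk_sizes_spec (Gs Sp : R) :
  0 < Sp -> 0 <= Gs ->
  (forall s, In s (chunk_sizes Gs Sp) -> 0 <= s <= Sp) /\ rsum (chunk_sizes Gs Sp) = Gs.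
Proof.
  intros HSp HG. unfold chunk_sizes.
  set (z := Int_part (Gs / Sp)).
  destruct (base_Int_part (Gs / Sp)) as [Hz1 Hz2]. fold z in Hz1, Hz2.
  assert (Hq : 0 <= Gs / Sp) by (apply Rdiv_le_0_compat; lra).
  assert (Hz : (0 <= z)%Z).
  { assert (Hz0 : IZR (-1) < IZR z) by lra. apply lt_IZR in Hz0. lia. }
  assert (Hn : INR (Z.to_nat z) = IZR z) by (rewrite INR_IZR_INZ, Z2Nat.id; auto).
  set (n := Z.to_nat z) in *.
  assert (Hfull : IZR z * Sp <= Gs).
  { replace Gs with (Gs / Sp * Sp) by (field; lra). apply Rmult_le_compat_r; lra. }
  assert (Hrest : Gs < (IZR z + 1) * Sp).
  { replace Gs with (Gs / Sp * Sp) at 1 by (field; lra). apply Rmult_lt_compat_r; lra. }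
  rewrite Hn. split.
  - intros s Hs. apply in_app_or in Hs as [Hs|Hs].
    + apply repeat_spec in Hs. lra.
    + destruct Rlt_dec; [|contradiction]. destruct Hs as [<-|[]]. lra.
  - rewrite rsum_app, rsum_repeat, Hn. destruct Rlt_dec; simpl; unfold rsum; simpl; lra.
Qed.

Definition instant_allreduce (d : durations) : durations :=
  {| d_AT := d_AT d; d_E := d_E d; d_D := d_D d; d_C := d_C d; beta := 0; G := G d |}.

(* The chunk size [1] is irrelevant: every chunk takes time [0]. *)
Definition limit_time (L Rp : nat) (d : durations) : R :=
  makespan_bound (beta d * G d)
    (run L Rp (instant_allreduce d) 1 (4 * L * Rp + 1) (mkLogged (init_state L Rp) [] [])).

Lemma iteration_time_bounds (L Rp : nat) (d : durations) (Sp : R) :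
  0 <= d_AT d -> 0 <= d_E d -> 0 <= d_D d -> 0 <= d_C d -> 0 <= beta d -> 0 <= G d -> 0 < Sp ->
  limit_time L Rp d <= iteration_time L Rp d Sp <=
  limit_time L Rp d + INR (4 * L * Rp + 1) * (beta d * Sp).
Proof.
  intros HAT HE HD HC Hb HG HSp.
  set (N := (4 * L * Rp + 1)%nat). set (c := beta d * Sp).
  assert (Hcomp : forall x, 0 <= comp_dur d x) by (intros []; simpl; lra).
  assert (Hcomm : forall a, 0 <= comm_dur d a) by (intros []; simpl; lra).
  destruct (chunk_sizes_spec (G d) Sp HSp HG) as [Hsizes Hsum].
  assert (Hchunk : forall du, In du (chunk_durs d Sp) -> 0 <= du <= c).
  { intros du Hdu. unfold chunk_durs in Hdu. apply in_map_iff in Hdu as (s & <- & Hs).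
    apply Hsizes in Hs. unfold c. split; [|apply Rmult_le_compat_l]; nra. }
  assert (Hchunk0 : forall du, In du (chunk_durs (instant_allreduce d) 1) -> 0 <= du <= 0).
  { intros du Hdu. unfold chunk_durs in Hdu. apply in_map_iff in Hdu as (s & <- & _). simpl; lra. }
  assert (HW : rsum (chunk_durs d Sp) = beta d * G d)
    by (unfold chunk_durs; now rewrite rsum_scal, Hsum).
  assert (Hc : 0 <= c) by (unfold c; nra).
  set (e := run L Rp d Sp N (mkLogged (init_state L Rp) [] [])).
  set (e0 := run L Rp (instant_allreduce d) 1 N (mkLogged (init_state L Rp) [] [])).
  assert (Hs : inv Rp d Sp c e) by (apply inv_run; auto; apply inv_init).
  assert (Hcp : coupled (INR N * c) e e0).
  { rewrite <- (Rplus_0_l (INR N * c)).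
    apply run_coupled; auto; [lra|apply inv_init|apply inv_init|apply coupled_init]. }
  assert (HDN : 0 <= INR N * c) by (pose proof (pos_INR N); nra).
  unfold iteration_time, limit_time. fold N e0. rewrite (simulate_run L Rp d Sp N _ [] []). fold e.
  rewrite <- HW. split.
  - now apply (makespan_bound_le_final_time Rp d Sp c e Hchunk Hs (INR N * c)).
  - eapply Rle_trans; [apply (final_time_le_makespan_bound Rp d Sp c e Hs)|].
    apply makespan_bound_coupled; auto; [apply (allreduce_work_nonneg d Sp c Hchunk)|apply Hs].
Qed.

Lemma squeeze_at_right_0 (f : R -> R) (l K : R) :
  (forall x, 0 < x -> l <= f x <= l + K * x) -> filterlim f (at_right 0) (locally l).
Proof.
  intros Hf.
  apply (filterlim_le_le (F := at_right 0) (fun _ => l) f (fun x => l + K * x) l).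
  - exists (mkposreal 1 Rlt_0_1). intros x _ Hx. now apply Hf.
  - apply filterlim_const.
  - replace (Finite l) with (Finite (l + K * 0)) by (f_equal; ring).
    apply (filterlim_filter_le_1 (F := locally 0)); [apply filter_le_within|].
    apply (continuous_plus (fun _ => l) (fun x => K * x)); [apply continuous_const|].
    apply (continuous_mult (fun _ => K) (fun x => x)); [apply continuous_const|apply continuous_id].
Qed.

Theorem theorem2 (L Rp : nat) (d : durations) :
  (1 <= L)%nat -> (1 <= Rp)%nat ->
  0 < d_AT d -> 0 < d_E d -> 0 < d_D d -> 0 < d_C d -> 0 < beta d -> 0 < G d ->
  exists Tmin : R,
    filterlim (fun Sp => iteration_time L Rp d Sp) (at_right 0) (locally Tmin) /\
    (forall Sp : R, 0 < Sp -> Tmin <= iteration_time L Rp d Sp).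
Proof.
  intros _ _ HAT HE HD HC Hb HG.
  assert (Hbounds : forall Sp, 0 < Sp ->
    limit_time L Rp d <= iteration_time L Rp d Sp
                      <= limit_time L Rp d + INR (4 * L * Rp + 1) * beta d * Sp).
  { intros Sp HSp. rewrite Rmult_assoc. apply iteration_time_bounds; lra. }
  exists (limit_time L Rp d). split.
  - now apply (squeeze_at_right_0 _ _ (INR (4 * L * Rp + 1) * beta d)).
  - intros Sp HSp. apply Hbounds, HSp.
Qed.
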